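(* Let $n\ge 2$ and $q\ge1$ be integers and let $S\subset Q_{q*}^n$ be an $A(n,q,n-1,n-2)$ design. Let $V\subset Q_{q*}^{2n}$ be the set of all concatenations $(s,x)$ with $s\in S$, $x\in Q_q^n$, together with all concatenations $(x,s)$ with $x\in Q_q^n$, $s\in S$. Then $V$ is an $A(2n,q,2n-1,2n-2)$ design.
   Context: For an integer $q\ge1$, $Q_q=\{0,1,\dots,q-1\}$ and $Q_{q*}=Q_q\cup\{*\}$. The weight of a word $u\in Q_{q*}^n$ is $n$ minus the number of $*$ symbols in $u$. For $u,v\in Q_{q*}^n$ we say $u$ extends $v$ if $u_i=v_i$ for every position $i$ with $v_i\neq *$. For integers $n\ge w\ge t\ge 1$, an $A(n,q,w,t)$ design is a set $S$ of words of weight $t$ in $Q_{q*}^n$ such that every word of weight $w$ in $Q_{q*}^n$ extends exactly one element of $S$. *)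

From mathcomp Require Import all_boot.
Set Implicit Arguments. Unset Strict Implicit. Unset Printing Implicit Defensive.

(* A word of Q_{q*}^n: position i holds [Some a] (a in Q_q) or [None] (= * ). *)
Definition word (n q : nat) := {ffun 'I_n -> option 'I_q}.

Definition weight n q (u : word n q) : nat := #|[set i | u i != None]|.

Definition extends n q (u v : word n q) : bool :=
  [forall i, (v i != None) ==> (u i == v i)].

Definition is_design n q w t (S : {set word n q}) : Prop :=
  (forall s, s \in S -> weight s = t) /\
  (forall u : word n q, weight u = w -> #|[set s in S | extends u s]| = 1).

Definition concat m n q (u : word m q) (v : word n q) : word (m + n) q :=
  [ffun i => match split i with inl j => u j | inr k => v k end].

Definition full n q (x : {ffun 'I_n -> 'I_q}) : word n q := [ffun i => Some (x i)].

Definition doubled_design n q (S : {set word n q}) : {set word (n + n) q} :=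
  [set concat s (full x) | s in S, x in [set: {ffun 'I_n -> 'I_q}]] :|:
  [set concat (full x) s | x in [set: {ffun 'I_n -> 'I_q}], s in S].

From mathcomp Require Import all_boot.
From mathcomp Require Import zify.
Set Implicit Arguments. Unset Strict Implicit.

(* A word of weight 2n-1 in Q_{q*}^{2n} has one full half and one half of weight n-1.
   The words of V it extends are concatenations extending it half by half, so their
   number is the number of words of S extending the half of weight n-1 (exactly one)
   times the number of full words extending the full half (exactly one), plus a
   count that vanishes because a word of weight n-1 extends no full word. *)

Definition lword m n q (w : word (m + n) q) : word m q := [ffun j => w (lshift n j)].
Definition rword m n q (w : word (m + n) q) : word n q := [ffun k => w (rshift m k)].

Definition full_words n q : {set word n q} := @full n q @: [set: {ffun 'I_n -> 'I_q}].

Section Concatenation.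

Variables m n q : nat.
Implicit Types (a c : word m q) (b d : word n q).

Lemma concat_lword_rword (w : word (m + n) q) : concat (lword w) (rword w) = w.
Proof.
apply/ffunP => i; rewrite !ffunE.
by case E: (split i) => [j|k]; have := splitK i; rewrite E /= => <-; rewrite ffunE.
Qed.

Lemma lword_concat a b : lword (concat a b) = a.
Proof. by apply/ffunP => j; rewrite !ffunE (unsplitK (inl j)). Qed.

Lemma rword_concat a b : rword (concat a b) = b.
Proof. by apply/ffunP => k; rewrite !ffunE (unsplitK (inr k)). Qed.

Lemma concat_pair_inj : injective (uncurry (@concat m n q)).
Proof.
move=> [a b] [c d] /= eq_ab_cd.
have := congr1 (@rword m n q) eq_ab_cd; have := congr1 (@lword m n q) eq_ab_cd.
by rewrite !lword_concat !rword_concat => -> ->.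
Qed.

Lemma extends_concat a b c d :
  extends (concat a b) (concat c d) = extends a c && extends b d.
Proof.
apply/forallP/andP.
- move=> ext; split; apply/forallP => j.
  + by have := ext (lshift n j); rewrite !ffunE (unsplitK (inl j)).
  + by have := ext (rshift m j); rewrite !ffunE (unsplitK (inr j)).
- move=> [/forallP ext_ac /forallP ext_bd] i; rewrite !ffunE.
  by case: (split i).
Qed.

Lemma weight_concat a b : weight (concat a b) = weight a + weight b.
Proof.
rewrite /weight -!sum1_card big_mkcond big_split_ord /=.
congr (_ + _); rewrite [RHS]big_mkcond; apply: eq_bigr => i _;
  by rewrite !inE ffunE ?(unsplitK (inl i)) ?(unsplitK (inr i)).
Qed.

Lemma card_extends_concat (A : {set word m q}) (B : {set word n q}) a b :
  #|[set v in @concat m n q @2: (A, B) | extends (concat a b) v]| =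
  #|[set c in A | extends a c]| * #|[set d in B | extends b d]|.
Proof.
have -> : [set v in @concat m n q @2: (A, B) | extends (concat a b) v] =
          @concat m n q @2: ([set c in A | extends a c], [set d in B | extends b d]).
  apply/setP => v; rewrite inE; apply/andP/imset2P.
  - case=> /imset2P [c d Ac Bd ->]; rewrite extends_concat => /andP [ext_ac ext_bd].
    by exists c d; rewrite // inE ?Ac ?Bd.
  - case=> c d; rewrite !inE => /andP [Ac ext_ac] /andP [Bd ext_bd] ->.
    by rewrite extends_concat ext_ac ext_bd imset2_f.
by rewrite curry_imset2X card_imset ?cardsX //; apply: concat_pair_inj.
Qed.

End Concatenation.

Section FullWords.

Variables n q : nat.
Implicit Types (u : word n q) (x : {ffun 'I_n -> 'I_q}).

Lemma weight_max u : weight u <= n.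
Proof. by rewrite /weight -[X in _ <= X]card_ord max_card. Qed.

Lemma weight_full x : weight (full x) = n.
Proof.
apply/eqP; rewrite eqn_leq weight_max /= -[X in X <= _]card_ord.
by apply/subset_leq_card/subsetP => i _; rewrite inE ffunE.
Qed.

Lemma mem_full_words u : 0 < q -> (u \in full_words n q) = (weight u == n).
Proof.
move=> q_gt0; apply/imsetP/eqP => [[x _ ->] | wu]; first exact: weight_full.
have all_set : [set i | u i != None] = setT.
  apply/eqP; rewrite eqEcard subsetT cardsT card_ord.
  by move: wu; rewrite /weight => ->; apply: leqnn.
exists [ffun i => odflt (Ordinal q_gt0) (u i)] => //; apply/ffunP => i; rewrite !ffunE.
have : i \in [set i | u i != None] by rewrite all_set inE.
by rewrite inE; case: (u i).
Qed.

Lemma extends_full u x : extends u (full x) = (u == full x).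
Proof.
apply/forallP/eqP => [ext | ->]; last by move=> i; rewrite eqxx implybT.
by apply/ffunP => i; have := ext i; rewrite ffunE => /eqP.
Qed.

Lemma card_extends_full_words u : 0 < q ->
  #|[set t in full_words n q | extends u t]| = (weight u == n).
Proof.
move=> q_gt0; rewrite -mem_full_words //.
have -> : [set t in full_words n q | extends u t] = [set u] :&: full_words n q.
  apply/setP => t; rewrite !inE andbC; apply: andb_id2r => /imsetP [x _ ->].
  by rewrite extends_full eq_sym.
case: (boolP (u \in full_words n q)) => uF.
  by rewrite (setIidPl _) ?cards1 ?sub1set.
by rewrite disjoint_setI0 ?cards0 ?disjoints1.
Qed.

End FullWords.

Lemma doubled_designE n q (S : {set word n q}) :
  doubled_design S =
  @concat n n q @2: (S, full_words n q) :|: @concat n n q @2: (full_words n q, S).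
Proof.
apply/setP => v; rewrite !inE; congr (_ || _); apply/imset2P/imset2P.
- by case=> [s x Ss _ ->]; exists s (full x) => //; apply: imset_f.
- by case=> [s _ Ss /imsetP [x _ ->] ->]; exists s x.
- by case=> [x s _ Ss ->]; exists (full x) s => //; apply: imset_f.
- by case=> [_ s /imsetP [x _ ->] Ss ->]; exists x s.
Qed.

Theorem proposition4 (n q : nat) (S : {set word n q}) :
  2 <= n -> 1 <= q ->
  is_design n.-1 n.-2 S ->
  is_design (n + n).-1 (n + n).-2 (doubled_design S).
Proof.
move=> n_ge2 q_gt0 [weight_S extends_S]; split.
  move=> v; rewrite doubled_designE => /setUP [] /imset2P [s t sS tS ->];
    rewrite weight_concat.
  - by move: tS; rewrite mem_full_words // => /eqP ->; rewrite weight_S //; lia.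
  - by move: sS; rewrite mem_full_words // => /eqP ->; rewrite weight_S //; lia.
move=> u; rewrite -(concat_lword_rword u) weight_concat.
move: (lword u) (rword u) => a b w_ab.
rewrite setIdE doubled_designE setIUl -!setIdE cardsU.
set X := [set v in _ @2: (S, _) | _]; set Y := [set v in _ @2: (_, S) | _].
have := subset_leq_card (subsetIl X Y); have := subset_leq_card (subsetIr X Y).
rewrite /X /Y !card_extends_concat !card_extends_full_words //.
have a_le := weight_max a; have b_le := weight_max b.
have [[wa wb] | [wa wb]] : (weight a = n.-1 /\ weight b = n) \/
                           (weight a = n /\ weight b = n.-1) by lia.
  by rewrite (extends_S _ wa) wa wb; lia.
by rewrite (extends_S _ wb) wa wb; lia.
Qed.
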